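(* Let $r_{BD}$ be the Belavin–Drinfeld $r$-matrix for $sl(n,\overline{\mathbb{K}})$ associated to an admissible triple $(\Gamma_1,\Gamma_2,\tau)$. Then $C(r_{BD})$ consists exactly of the diagonal matrices $T=\mathrm{diag}(t_1,\dots,t_n)$ with $t_i=s_is_{i+1}\cdots s_n$, where $s_1,\dots,s_n\in\overline{\mathbb{K}}^\times$ satisfy $s_i=s_j$ whenever $\alpha_i\in\Gamma_1$ and $\tau(\alpha_i)=\alpha_j$.
   Context: $\mathbb{K}=\mathbb{C}((\hbar))$, $\overline{\mathbb{K}}$ its algebraic closure. For $sl(n)$: Cartan $\mathfrak{h}$ = traceless diagonal matrices, simple roots $\alpha_i=\epsilon_i-\epsilon_{i+1}$, root vectors $e_{\epsilon_i-\epsilon_k}=e_{ik}$, $\Omega=\sum_{i,k}e_{ik}\otimes e_{ki}-\frac1nI\otimes I$ with Cartan part $\Omega_0$. Admissible triple: $\Gamma_1,\Gamma_2\subset\{\alpha_1,\dots,\alpha_{n-1}\}$, $\tau:\Gamma_1\to\Gamma_2$ isometric bijection with every $\alpha\in\Gamma_1$ having some $\tau^k(\alpha)\notin\Gamma_1$. $r_{BD}=r_0+\sum_{\alpha>0}e_\alpha\otimes e_{-\alpha}+\sum_{\beta\in(\mathbb{Z}\Gamma_1)^+}\sum_{k\ge1}e_\beta\wedge e_{-\tau^k(\beta)}$ with $r_0\in\mathfrak{h}(\overline{\mathbb{K}})^{\otimes2}$, $r_0+r_0^{21}=\Omega_0$, $(\tau(\alpha)\otimes1+1\otimes\alpha)(r_0)=0$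 for $\alpha\in\Gamma_1$. $C(r)=\{X\in GL(n,\overline{\mathbb{K}}):(\mathrm{Ad}_X\otimes\mathrm{Ad}_X)(r)=r\}$ with $\mathrm{Ad}_X(a)=XaX^{-1}$. *)

From HB Require Import structures.
From mathcomp Require Import all_boot all_order all_algebra.
Set Implicit Arguments. Unset Strict Implicit. Unset Printing Implicit Defensive.
Import Order.TTheory GRing.Theory Num.Theory.
Local Open Scope ring_scope.

(* Elements of gl(n) (x) gl(n) are represented as t = sum_{(i,j)} e_ij (x) t(i,j),
   i.e. as finite functions from pairs of indices to n x n matrices. *)
Definition tensor (F : fieldType) (n : nat) := {ffun 'I_n * 'I_n -> 'M[F]_n}.

Section BD.
Variables (F : fieldType) (n : nat).

Definition E (i k : 'I_n) : 'M[F]_n := delta_mx i k.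

Definition tp (a b : 'M[F]_n) : tensor F n := [ffun p => a p.1 p.2 *: b].

Definition wedge (a b : 'M[F]_n) : tensor F n := tp a b - tp b a.

Definition tmap (f g : 'M[F]_n -> 'M[F]_n) (t : tensor F n) : tensor F n :=
  \sum_(p : 'I_n * 'I_n) tp (f (E p.1 p.2)) (g (t p)).

Definition Ad (X : 'M[F]_n) (a : 'M[F]_n) : 'M[F]_n := X *m a *m invmx X.

Definition Cset (r : tensor F n) (X : 'M[F]_n) : Prop :=
  X \in unitmx /\ tmap (Ad X) (Ad X) r = r.

(* Simple roots alpha_j = eps_j - eps_{j+1} indexed by j : 'I_n.-1 (0-based). *)
Definition sr_lo (j : 'I_n.-1) : 'I_n := widen_ord (leq_pred n) j.
Lemma sr_hi_proof (j : 'I_n.-1) : (j.+1 < n)%N.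
Proof. by rewrite -ltn_predRL. Qed.
Definition sr_hi (j : 'I_n.-1) : 'I_n := Ordinal (sr_hi_proof j).

(* inner product (alpha_i, alpha_j) of simple roots of sl(n) *)
Definition cartan (i j : 'I_n.-1) : int :=
  if i == j then 2%:~R else if (i.+1 == j :> nat) || (j.+1 == i :> nat) then - 1 else 0.

(* Admissible triple (Gamma1, Gamma2, tau); tau is a total function on simple
   root indices, only its restriction to Gamma1 matters. *)
Definition admissible (G1 G2 : {set 'I_n.-1}) (tau : 'I_n.-1 -> 'I_n.-1) : Prop :=
  [/\ {in G1 &, injective tau}, tau @: G1 = G2,
      {in G1 &, forall i j, cartan (tau i) (tau j) = cartan i j} &
      forall i, i \in G1 -> exists k, iter k tau i \notin G1].

(* Root lattice elements in coordinates w.r.t. simple roots. *)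
(* positive root eps_a - eps_b (a < b) = alpha_a + ... + alpha_{b-1} *)
Definition rootc (a b : nat) : 'I_n.-1 -> int := fun j => ((a <= j) && (j < b))%N%:Z.

(* linear extension of tau to Z Gamma1 *)
Definition tauc (G1 : {set 'I_n.-1}) (tau : 'I_n.-1 -> 'I_n.-1) (c : 'I_n.-1 -> int)
  : 'I_n.-1 -> int := fun m => \sum_(j in G1 | tau j == m) c j.

Definition inZG1 (G1 : {set 'I_n.-1}) (c : 'I_n.-1 -> int) : bool :=
  [forall j, (j \notin G1) ==> (c j == 0)].

(* beta = eps_i - eps_k lies in (Z Gamma1)^+, tau^p(beta) is defined
   (i.e. tau^m(beta) in Z Gamma1 for all m < p) and equals eps_a - eps_b *)
Definition tau_pow_maps (G1 : {set 'I_n.-1}) (tau : 'I_n.-1 -> 'I_n.-1)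
  (p : nat) (i k a b : 'I_n) : bool :=
  [forall m : 'I_p, inZG1 G1 (iter m (tauc G1 tau) (rootc i k))] &&
  [forall j, iter p (tauc G1 tau) (rootc i k) j == rootc a b j].

Definition r0_of (R0 : 'M[F]_n) : tensor F n :=
  \sum_(i < n) \sum_(j < n) R0 i j *: tp (E i i) (E j j).

(* r0 lies in h (x) h, h = traceless diagonal matrices *)
Definition in_hh (R0 : 'M[F]_n) : Prop :=
  (forall i, \sum_(j < n) R0 i j = 0) /\ (forall j, \sum_(i < n) R0 i j = 0).

(* coefficient matrix of Omega_0 = sum_i e_ii (x) e_ii - 1/n I (x) I *)
Definition Omega0c : 'M[F]_n := \matrix_(i, j) ((i == j)%:R - n%:R^-1).

(* alpha_j as a linear functional on diagonal matrices: weights *)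
Definition rw (j : 'I_n.-1) (i : 'I_n) : F := (i == sr_lo j)%:R - (i == sr_hi j)%:R.

(* (tau(alpha_j) (x) 1 + 1 (x) alpha_j)(r0) = 0, written coefficientwise on the
   basis e_mm of the diagonal *)
Definition r0_tau_cond (G1 : {set 'I_n.-1}) (tau : 'I_n.-1 -> 'I_n.-1) (R0 : 'M[F]_n) : Prop :=
  forall j, j \in G1 -> forall m : 'I_n,
    \sum_(i < n) rw (tau j) i * R0 i m + \sum_(k < n) rw j k * R0 m k = 0.

Definition rBD (G1 : {set 'I_n.-1}) (tau : 'I_n.-1 -> 'I_n.-1) (R0 : 'M[F]_n) : tensor F n :=
  r0_of R0
  + \sum_(i < n) \sum_(k < n | (i < k)%N) tp (E i k) (E k i)
  + \sum_(i < n) \sum_(k < n | (i < k)%N) \sum_(a < n) \sum_(b < n | (a < b)%N)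
      \sum_(1 <= p < n.+1 | tau_pow_maps G1 tau p i k a b) wedge (E i k) (E b a).

Definition Tdiag (s : 'I_n -> F) : 'M[F]_n := diag_mx (\row_(i < n) \prod_(k < n | (i <= k)%N) s k).

End BD.

From HB Require Import structures.
From mathcomp Require Import all_boot all_order all_algebra.
From mathcomp Require Import ring zify.
From Stdlib Require Import FunctionalExtensionality.
Import Order.TTheory GRing.Theory Num.Theory.
Set Implicit Arguments. Unset Strict Implicit. Unset Printing Implicit Defensive.
Local Open Scope ring_scope.

(* Write Lr C = (tr(- C) (x) id)(r_BD) for the contraction of r_BD against a
   matrix C.  If X lies in C(r_BD) then Lr commutes with Ad X (Lr_Ad), and the
   triangular structure of Lr does the rest:
   - on strictly upper triangular matrices Lr moves entries along tau-chains of
     positive roots, and on strictly lower ones Lr - 1 moves them backwards;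
     since tau is nilpotent (no_long_chain) both maps are nilpotent there;
   - hence Ad X maps the principal nilpotent shift into the upper triangle and
     shift^T into the lower one, which forces X to be diagonal (Cset_diagonal);
   - comparing Lr (Ad X e) and Ad X (Lr e) for e = e_(j+1,j), whose image has
     a nonzero entry at -tau(alpha_j) in characteristic 0, shows that the
     ratios x_(j+1) / x_j are tau-invariant (Cset_diag_ratio); writing
     X = Tdiag s (diag_Tdiag) this is the condition s_j = s_(tau j).
   Conversely, for T = Tdiag s every term e_(ik) (x) e_(ba) of r_BD has weight
   t_i t_b / (t_k t_a) = 1 by tau-invariance of s (tt_tpm), so Lr commutes
   with Ad T and T lies in C(r_BD) (Tdiag_in_Cset). *)

Lemma iter_bounded (T : finType) (f : T -> T) (x : T) (m : nat) :
  exists2 i, (i < #|T|)%N & iter m f x = iter i f x.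
Proof.
have /loopingP/(_ m)/trajectP [i lt_i ->] := looping_order f x.
by exists i => //; apply: leq_trans lt_i (max_card _).
Qed.

Section TauChains.
Variables (n : nat) (G1 : {set 'I_n.-1}) (tau : 'I_n.-1 -> 'I_n.-1).
Local Notation tpm := (tau_pow_maps G1 tau).
Local Notation tauL := (tauc G1 tau).

Lemma tpmP p (i k a b : 'I_n) : tpm p i k a b <->
  (forall m, (m < p)%N -> inZG1 G1 (iter m tauL (rootc i k))) /\
  iter p tauL (rootc i k) = rootc a b.
Proof.
split => [/andP [/forallP inZ /forallP image]|[inZ image]].
  split => [m lt_mp|]; first exact: (inZ (Ordinal lt_mp)).
  by apply: functional_extensionality => j; apply/eqP/image.
by apply/andP; split; apply/forallP => j; rewrite ?image ?inZ.
Qed.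

Lemma tpm_comp p q (i k a b c d : 'I_n) :
  tpm p i k a b -> tpm q a b c d -> tpm (p + q) i k c d.
Proof.
move=> /tpmP [inZ1 image1] /tpmP [inZ2 image2]; apply/tpmP; split; last first.
  by rewrite addnC iterD image1.
move=> m lt_m; case: (ltnP m p) => [|le_pm]; first exact: inZ1.
rewrite -(subnK le_pm) iterD image1; apply: inZ2; lia.
Qed.

Lemma tauc_ge0 c x : (forall y, 0 <= c y) -> 0 <= tauL c x.
Proof. by move=> c_ge0; apply: sumr_ge0 => j _; apply: c_ge0. Qed.

Hypothesis tau_nilp : forall i, i \in G1 -> exists k, iter k tau i \notin G1.

(* Following the simple root alpha_i, every iterate tau^m(beta)
   has a positive coordinate at tau^m(alpha_i), so this orbit would never leave
   Gamma1. *)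
Lemma no_long_chain p (i k a b : 'I_n) : (i < k)%N -> (n <= p)%N -> ~ tpm p i k a b.
Proof.
move=> lt_ik le_np /tpmP [inZ _].
have lt_i : (i < n.-1)%N by have := ltn_ord k; lia.
pose j0 : 'I_n.-1 := Ordinal lt_i.
pose c m := iter m tauL (rootc i k).
have c_ge0 m y : 0 <= c m y.
  by elim: m y => [|m IH] y; [rewrite /c /rootc | apply: tauc_ge0].
have c_pos m : (m <= p)%N -> 0 < c m (iter m tau j0).
  elim: m => [_|m IH le_mp]; first by rewrite /c /= /rootc /= leqnn lt_ik.
  have inG : iter m tau j0 \in G1.
    move/forallP: (inZ m le_mp) => /(_ (iter m tau j0)).
    by apply: contraLR => notG; rewrite notG /= lt0r_neq0 // IH // ltnW.
  rewrite /c iterS /= /tauc (bigD1 (iter m tau j0)) /=; last by rewrite inG eqxx.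
  apply: (lt_le_trans (IH (ltnW le_mp))); rewrite lerDl.
  by apply: sumr_ge0 => y _; apply: c_ge0.
have orbit_in_G1 m : (m < n)%N -> iter m tau j0 \in G1.
  move=> lt_mn; have lt_mp : (m < p)%N by lia.
  move/forallP: (inZ m lt_mp) => /(_ (iter m tau j0)).
  by apply: contraLR => notG; rewrite notG /= lt0r_neq0 // c_pos // ltnW.
have j0_in : j0 \in G1 by apply: (orbit_in_G1 0%N); lia.
have [m] := tau_nilp j0_in; have [m' lt_m' ->] := iter_bounded tau j0 m.
move/negP; apply; apply: orbit_in_G1.
by move: lt_m'; rewrite card_ord; lia.
Qed.

End TauChains.

Section Weights.
Variables (F : fieldType) (n : nat) (G1 : {set 'I_n.-1}) (tau : 'I_n.-1 -> 'I_n.-1).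
Variables (s : 'I_n -> F).
Hypothesis s_neq0 : forall i, s i != 0.
Hypothesis s_tau : forall j, j \in G1 -> s (sr_lo j) = s (sr_lo (tau j)).

Lemma exprz_sum (x : F) I (r : seq I) (P : pred I) (f : I -> int) : x != 0 ->
  x ^ (\sum_(i <- r | P i) f i) = \prod_(i <- r | P i) x ^ (f i).
Proof.
move=> x_neq0; have x_unit : x \is a GRing.unit by rewrite unitfE.
exact: (big_morph (fun e => x ^ e) (exprzDr x_unit) (expr0z x)).
Qed.

Definition wt (c : 'I_n.-1 -> int) : F := \prod_(j : 'I_n.-1) s (sr_lo j) ^ (c j).

(* Since s is tau-invariant on Gamma1, the character is invariant under the
   linear extension of tau on Z Gamma1. *)
Lemma wt_tauc c : inZG1 G1 c -> wt (tauc G1 tau c) = wt c.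
Proof.
move=> /forallP c_in; rewrite /wt /tauc.
transitivity (\prod_(m : 'I_n.-1) \prod_(j in G1 | tau j == m) s (sr_lo j) ^ (c j)).
  apply: eq_bigr => m _; rewrite exprz_sum //.
  by apply: eq_bigr => j /andP [j_in /eqP <-]; rewrite (s_tau j_in).
transitivity (\prod_(j in G1) s (sr_lo j) ^ c j).
  by rewrite [RHS](partition_big (P := fun j => j \in G1) tau predT).
rewrite [RHS](bigID (fun j => j \in G1)) /= [X in _ = _ * X]big1 ?mulr1 //.
by move=> j j_notin; move: (c_in j); rewrite j_notin => /eqP ->; rewrite expr0z.
Qed.

Lemma wt_tpm p (i k a b : 'I_n) :
  tau_pow_maps G1 tau p i k a b -> wt (rootc i k) = wt (rootc a b).
Proof.
move=> /tpmP [inZ <-].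
suff wt_iter m : (m <= p)%N -> wt (iter m (tauc G1 tau) (rootc i k)) = wt (rootc i k).
  by rewrite wt_iter.
by elim: m => [//|m IH] le_mp; rewrite iterS wt_tauc ?IH ?inZ // ltnW.
Qed.

Definition tt (i : 'I_n) : F := \prod_(m < n | (i <= m)%N) s m.

Lemma tt_neq0 i : tt i != 0.
Proof. by apply/prodf_neq0 => m _; apply: s_neq0. Qed.

(* s extended by 1 outside 'I_n, to reindex products over 'I_n.-1 and 'I_n. *)
Let s_nat (m : nat) : F := odflt 1 (omap s (insub m)).
Let s_natE (o : 'I_n) : s_nat o = s o. Proof. by rewrite /s_nat valK. Qed.

Lemma tt_rootc (i k : 'I_n) : (i <= k)%N -> tt i = wt (rootc i k) * tt k.
Proof.
move=> le_ik; have le_kn : (k <= n.-1)%N by have := ltn_ord k; lia.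
have -> : wt (rootc i k) = \prod_(m < n | (i <= m < k)%N) s_nat m.
  transitivity (\prod_(j < n.-1 | (i <= j < k)%N) s_nat j).
    rewrite [RHS]big_mkcond; apply: eq_bigr => j _; rewrite /rootc.
    by case: ifP; rewrite ?expr1z ?expr0z // -s_natE.
  rewrite (big_ord_widen_cond (n1 := n.-1) n (fun m => (i <= m < k)%N) s_nat) ?leq_pred //.
  by apply: eq_bigl => m; apply/idP/idP => [/andP []|/[dup] /andP [_ lt_mk] ->] //=; lia.
rewrite /tt (bigID (fun m : 'I_n => (m < k)%N)) /=; congr (_ * _).
  by apply: eq_bigr => m _; rewrite s_natE.
apply: eq_bigl => m; rewrite -leqNgt; apply/idP/idP => [/andP [] //|le_km].
by rewrite (leq_trans le_ik le_km).
Qed.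

(* The weight identity behind the invariance of r_BD: if tau^p maps
   eps_i - eps_k to eps_a - eps_b then t_i t_b = t_k t_a. *)
Lemma tt_tpm p (i k a b : 'I_n) : (i <= k)%N -> (a <= b)%N ->
  tau_pow_maps G1 tau p i k a b -> tt i * tt b = tt k * tt a.
Proof.
by move=> le_ik le_ab chain; rewrite (tt_rootc le_ik) (tt_rootc le_ab) (wt_tpm chain); ring.
Qed.

End Weights.

Section Matrices.
Variables (F : fieldType) (n : nat).

Definition shift : 'M[F]_n := \matrix_(i, j) ((j : nat) == i.+1)%:R.

(* Powers of a square matrix of arbitrary (possibly zero) size. *)
Definition mxpow (A : 'M[F]_n) (k : nat) : 'M[F]_n := iter k (mulmx A) 1%:M.

Lemma mxpow_conj (Y Yi A : 'M[F]_n) k : Yi *m Y = 1%:M ->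
  mxpow (Y *m A *m Yi) k.+1 = Y *m mxpow A k.+1 *m Yi.
Proof.
move=> YiY; elim: k => [|k IH]; first by rewrite /mxpow /= !mulmx1.
rewrite /mxpow iterS -/(mxpow _ k.+1) IH iterS -/(mxpow _ k.+1).
by rewrite !mulmxA -[Y *m A *m Yi *m Y]mulmxA YiY mulmx1.
Qed.

Lemma mxpow_shift k (u v : 'I_n) : mxpow shift k u v = ((v : nat) == (u + k)%N)%:R.
Proof.
elim: k u v => [|k IH] u v; first by rewrite /mxpow /= mxE addn0 eq_sym.
rewrite /mxpow iterS -/(mxpow _ k) mxE.
case: (ltnP u.+1 n) => [lt_un|le_nu].
  rewrite (bigD1 (Ordinal lt_un)) //= big1 ?addr0.
    by rewrite mxE eqxx mul1r IH /= addSnnS.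
  move=> j j_neq; rewrite mxE; case: eqP => [j_eq|]; last by rewrite mul0r.
  by case/eqP: j_neq; apply: val_inj.
rewrite big1 => [|j _]; last first.
  by rewrite mxE; case: eqP => [j_eq|]; rewrite ?mul0r //; have := ltn_ord j; lia.
by case: eqP => //; have := ltn_ord v; lia.
Qed.

Lemma mxpow_shift_n : mxpow shift n = 0.
Proof.
apply/matrixP => u v; rewrite mxpow_shift mxE.
by case: eqP => //; have := ltn_ord v; lia.
Qed.

Lemma mxpow_upper (C : 'M[F]_n) : (forall u v : 'I_n, (v < u)%N -> C u v = 0) ->
  forall k, (forall u v : 'I_n, (v < u)%N -> mxpow C k u v = 0) /\
            (forall u : 'I_n, mxpow C k u u = C u u ^+ k).
Proof.
move=> C_up; elim=> [|k [IH1 IH2]].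
  split => [u v lt_vu|u]; rewrite /mxpow /= mxE ?expr0 ?eqxx //.
  by rewrite (_ : u == v = false) //; apply/negbTE; rewrite neq_ltn lt_vu orbT.
split => [u v lt_vu|u]; rewrite /mxpow iterS -/(mxpow _ k) mxE.
  apply: big1 => j _; case: (ltnP j u) => [lt_ju|le_uj]; first by rewrite C_up ?mul0r.
  by rewrite IH1 ?mulr0 // (leq_trans lt_vu).
rewrite (bigD1 u) //= big1 ?addr0 ?IH2 ?exprS // => j j_neq.
case: (ltnP j u) => [lt_ju|le_uj]; first by rewrite C_up ?mul0r.
rewrite IH1 ?mulr0 // ltn_neqAle le_uj andbT; apply: contra j_neq => /eqP ju.
by apply/eqP/val_inj.
Qed.

(* A conjugate of the shift which is upper triangular has zero diagonal,
   since it is nilpotent. *)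
Lemma conj_shift_diag (Y Yi : 'M[F]_n) : (0 < n)%N -> Yi *m Y = 1%:M ->
  (forall u v : 'I_n, (v < u)%N -> (Y *m shift *m Yi) u v = 0) ->
  forall u, (Y *m shift *m Yi) u u = 0.
Proof.
move=> n_gt0 YiY C_up u; have [_ diag_pow] := mxpow_upper C_up n.
have nilp : mxpow (Y *m shift *m Yi) n = 0.
  rewrite -[X in mxpow _ X](prednK n_gt0) mxpow_conj // [X in mxpow _ X](prednK n_gt0).
  by rewrite mxpow_shift_n mulmx0 mul0mx.
by move: (diag_pow u); rewrite nilp mxE => /esym/eqP; rewrite expf_eq0 => /andP [_ /eqP].
Qed.

Lemma intertwine_shift_upper (X C : 'M[F]_n) : X *m shift = C *m X ->
  (forall u v : 'I_n, C u v != 0 -> (u < v)%N) ->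
  forall i j : 'I_n, (j < i)%N -> X i j = 0.
Proof.
move=> XC C_up.
suff ind d (i : 'I_n) : (n - i <= d)%N -> forall j : 'I_n, (j < i)%N -> X i j = 0.
  by move=> i; apply: (ind (n - i)%N).
elim: d i => [|d IH] i le_d j lt_ji; first by have := ltn_ord i; lia.
have lt_j1 : (j.+1 < n)%N by have := ltn_ord i; lia.
have := congr1 (fun M : 'M[F]_n => M i (Ordinal lt_j1)) XC; rewrite /= !mxE.
rewrite (bigD1 j) //= mxE eqxx mulr1 big1 ?addr0 => [->|k k_neq]; last first.
  rewrite mxE; case: eqP => [/succn_inj jk|]; last by rewrite mulr0.
  by case/eqP: k_neq; apply: val_inj.
apply: big1 => k _; have [->|Cik_neq0] := eqVneq (C i k) 0; first by rewrite mul0r.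
by rewrite (IH k) ?mulr0 //=; have := C_up _ _ Cik_neq0; lia.
Qed.

Lemma intertwine_shiftT_lower (X C : 'M[F]_n) : X *m shift^T = C *m X ->
  (forall u v : 'I_n, C u v != 0 -> (v < u)%N) ->
  forall i j : 'I_n, (i < j)%N -> X i j = 0.
Proof.
move=> XC C_low.
have X_col i (j : 'I_n) (lt_j : (j.-1 < n)%N) : (0 < j)%N ->
    X i j = \sum_(k < n) C i k * X k (Ordinal lt_j).
  move=> j_gt0; have := congr1 (fun M : 'M[F]_n => M i (Ordinal lt_j)) XC.
  rewrite /= !mxE => <-; rewrite (bigD1 j) //= !mxE big1 ?addr0 => [|k k_neq].
    by rewrite (_ : (j : nat) == j.-1.+1) ?mulr1 //; apply/eqP; lia.
  rewrite !mxE; case: eqP => [/= kj|]; last by rewrite mulr0.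
  by case/eqP: k_neq; apply: val_inj; rewrite /= kj; lia.
suff ind d (i : 'I_n) : (i <= d)%N -> forall j : 'I_n, (i < j)%N -> X i j = 0.
  by move=> i; apply: (ind i).
elim: d i => [|d IH] i le_id j lt_ij.
all: have lt_j : (j.-1 < n)%N by have := ltn_ord j; lia.
all: rewrite (X_col i j lt_j); last by lia.
all: apply: big1 => k _; have [->|Cik_neq0] := eqVneq (C i k) 0; first by rewrite mul0r.
all: have lt_ki := C_low _ _ Cik_neq0.
  lia.
by rewrite (IH k) ?mulr0 //=; lia.
Qed.

Lemma diag_invmx (X : 'M[F]_n) : X \in unitmx ->
  (forall i j : 'I_n, i != j -> X i j = 0) ->
  (forall u, X u u != 0) /\ (forall u v, invmx X u v = (u == v)%:R / X u u).
Proof.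
move=> X_unit X_diag.
have XV u v : X u u * invmx X u v = (u == v)%:R.
  have := congr1 (fun M : 'M[F]_n => M u v) (mulmxV X_unit); rewrite /= !mxE.
  by rewrite (bigD1 u) //= big1 ?addr0 // => k k_neq; rewrite X_diag ?mul0r // eq_sym.
have Xuu_neq0 u : X u u != 0.
  by apply/eqP => Xuu0; move: (XV u u); rewrite Xuu0 mul0r eqxx => /eqP; rewrite eq_sym oner_eq0.
by split => // u v; rewrite -(XV u v) mulrAC mulfV ?mul1r.
Qed.

Lemma Ad_diagE (X B : 'M[F]_n) : X \in unitmx ->
  (forall i j : 'I_n, i != j -> X i j = 0) ->
  forall u v, Ad X B u v = X u u * B u v / X v v.
Proof.
move=> X_unit X_diag u v; have [_ XV] := diag_invmx X_unit X_diag.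
rewrite mxE (bigD1 v) //= big1 ?addr0 => [|k k_neq]; last first.
  by rewrite XV (negbTE k_neq) mul0r mulr0.
rewrite XV eqxx mul1r mxE (bigD1 u) //= big1 ?addr0 ?mulrA // => k k_neq.
by rewrite X_diag ?mul0r // eq_sym.
Qed.

End Matrices.

Section Contraction.
Variables (F : fieldType) (n : nat).

(* The contraction of a tensor t against a matrix C in the first factor,
   contr t C = (tr(- C) (x) id)(t); on pure tensors a (x) b it is tr(a C) b. *)
Definition contr (t : tensor F n) (C : 'M[F]_n) : 'M[F]_n :=
  \sum_(q : 'I_n * 'I_n) C q.2 q.1 *: t q.

Lemma contrD t1 t2 C : contr (t1 + t2) C = contr t1 C + contr t2 C.
Proof. by rewrite /contr -big_split; apply: eq_bigr => q _; rewrite ffunE scalerDr. Qed.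

Lemma contrB t1 t2 C : contr (t1 - t2) C = contr t1 C - contr t2 C.
Proof.
rewrite /contr -sumrB; apply: eq_bigr => q _.
by rewrite ffunE ffunE scalerBr.
Qed.

Lemma contrZ c t C : contr (c *: t) C = c *: contr t C.
Proof. by rewrite /contr scaler_sumr; apply: eq_bigr => q _; rewrite ffunE !scalerA mulrC. Qed.

Lemma contr_sum I (r : seq I) (P : pred I) (f : I -> tensor F n) C :
  contr (\sum_(i <- r | P i) f i) C = \sum_(i <- r | P i) contr (f i) C.
Proof.
have contr0 : contr 0 C = 0 by rewrite /contr big1 // => q _; rewrite ffunE scaler0.
exact: (big_morph (contr^~ C) (fun a b => contrD a b C) contr0).
Qed.

Lemma elemE (i k a b : 'I_n) : E F i k a b = ((a == i) && (b == k))%:R.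
Proof. by rewrite /E mxE. Qed.

Lemma sum_delta_pair (a b : 'I_n) (G : 'I_n * 'I_n -> F) :
  \sum_(q : 'I_n * 'I_n) ((q.1 == a) && (q.2 == b))%:R * G q = G (a, b).
Proof.
rewrite (bigD1 (a, b)) //= !eqxx mul1r big1 ?addr0 // => -[x y] /negbTE.
by rewrite xpair_eqE /= => ->; rewrite mul0r.
Qed.

Lemma contr_tp (i k : 'I_n) b C : contr (tp (E F i k) b) C = C k i *: b.
Proof.
transitivity (\sum_(q : 'I_n * 'I_n) (((q.1 == i) && (q.2 == k))%:R * C q.2 q.1) *: b).
  by apply: eq_bigr => q _; rewrite ffunE elemE scalerA mulrC.
by rewrite -scaler_suml sum_delta_pair.
Qed.

Lemma contr_inj (t1 t2 : tensor F n) : (forall C, contr t1 C = contr t2 C) -> t1 = t2.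
Proof.
move=> eq_contr; apply/ffunP => -[a b].
suff contr_delta t : contr t (E F b a) = t (a, b) by rewrite -!contr_delta eq_contr.
rewrite /contr (bigD1 (a, b)) //= elemE !eqxx scale1r big1 ?addr0 // => -[x y].
by rewrite xpair_eqE elemE andbC /= => /negbTE ->; rewrite scale0r.
Qed.

Lemma mul_delta_mul (X Y : 'M[F]_n) (i j a b : 'I_n) :
  (X *m E F i j *m Y) a b = X a i * Y j b.
Proof.
rewrite mxE (bigD1 j) //= big1 ?addr0 => [|k /negbTE k_neq]; last first.
  by rewrite mxE big1 ?mul0r // => l _; rewrite elemE k_neq andbF mulr0.
rewrite mxE (bigD1 i) //= big1 ?addr0 ?elemE ?eqxx ?mulr1 // => k /negbTE k_neq.
by rewrite elemE k_neq mulr0.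
Qed.

(* Contracting (Ad X (x) Ad X)(t) against C amounts to contracting t against
   Ad X^-1 (C) and then applying Ad X: this turns the invariance of r into a
   commutation relation between Ad X and contraction against r. *)
Lemma contr_tmap (X : 'M[F]_n) t C :
  contr (tmap (Ad X) (Ad X) t) C = Ad X (contr t (invmx X *m C *m X)).
Proof.
rewrite /contr /tmap.
transitivity (\sum_(q : 'I_n * 'I_n) \sum_(p : 'I_n * 'I_n)
     (C q.2 q.1 * (Ad X (E F p.1 p.2)) q.1 q.2) *: Ad X (t p)).
  apply: eq_bigr => q _; rewrite sum_ffunE scaler_sumr; apply: eq_bigr => p _.
  by rewrite ffunE scalerA.
rewrite exchange_big /= {3}/Ad mulmx_sumr mulmx_suml; apply: eq_bigr => p _.
rewrite -scaler_suml -scalemxAr -scalemxAl; congr (_ *: _).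
rewrite -(pair_bigA _ (fun a b => C b a * (X *m E F p.1 p.2 *m invmx X) a b)) /= mxE.
apply: eq_bigr => k _; rewrite mxE mulr_suml.
by apply: eq_bigr => l _; rewrite mul_delta_mul; ring.
Qed.

End Contraction.

Lemma sum_neq0 (V : nmodType) (I : eqType) (r : seq I) (P : pred I) (f : I -> V) :
  \sum_(i <- r | P i) f i != 0 -> exists i, [/\ i \in r, P i & f i != 0].
Proof.
move=> sum_neq; suff /hasP [i i_r /andP [Pi fi]] : has (fun i => P i && (f i != 0)) r.
  by exists i.
apply: contraNT sum_neq => /hasPn f0; rewrite big1_seq // => i /andP [Pi i_r].
by move: (f0 i i_r); rewrite Pi /= negbK => /eqP.
Qed.

Lemma sum_lt_pair_delta (F : fieldType) (n : nat) (x y : 'I_n) (G : 'I_n -> 'I_n -> F) :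
  (forall a b, ~~ ((a == x) && (b == y)) -> G a b = 0) ->
  \sum_(a < n) \sum_(b < n | (a < b)%N) G a b = ((x < y)%N)%:R * G x y.
Proof.
move=> G_supp; rewrite (bigD1 x) //= [X in _ + X]big1 ?addr0 => [|a a_neq]; last first.
  by apply: big1 => b _; apply: G_supp; rewrite (negbTE a_neq).
rewrite big_mkcond (bigD1 y) //= [X in _ + X]big1 ?addr0 => [|b b_neq].
  by case: (x < y)%N; rewrite ?mul1r ?mul0r.
by case: ifP => // _; apply: G_supp; rewrite eqxx /= b_neq.
Qed.

Section ContractionBD.
Variables (F : fieldType) (n : nat) (G1 : {set 'I_n.-1}) (tau : 'I_n.-1 -> 'I_n.-1).
Variable (R0 : 'M[F]_n).
Local Notation tpm := (tau_pow_maps G1 tau).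

Definition r_plus : tensor F n :=
  \sum_(i < n) \sum_(k < n | (i < k)%N) tp (E F i k) (E F k i).
Definition r_tau : tensor F n :=
  \sum_(i < n) \sum_(k < n | (i < k)%N) \sum_(a < n) \sum_(b < n | (a < b)%N)
    \sum_(1 <= p < n.+1 | tpm p i k a b) wedge (E F i k) (E F b a).

Lemma rBDE : rBD G1 tau R0 = r0_of R0 + r_plus + r_tau.
Proof. by []. Qed.

(* Contraction against r_BD; an element X of C(r_BD) makes Ad X commute with
   this linear map, whose triangular structure drives the whole proof. *)
Definition Lr (C : 'M[F]_n) : 'M[F]_n := contr (rBD G1 tau R0) C.

Definition chain_in (C : 'M[F]_n) (a b : 'I_n) : F :=
  \sum_(i < n) \sum_(k < n | (i < k)%N) \sum_(1 <= p < n.+1 | tpm p i k a b) C k i.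

Definition chain_out (C : 'M[F]_n) (i k : 'I_n) : F :=
  \sum_(a < n) \sum_(b < n | (a < b)%N) \sum_(1 <= p < n.+1 | tpm p i k a b) C a b.

Lemma contr_r0 C u v :
  contr (r0_of R0) C u v = (u == v)%:R * \sum_(i < n) R0 i u * C i i.
Proof.
rewrite contr_sum summxE mulr_sumr; apply: eq_bigr => i _.
rewrite contr_sum summxE.
transitivity (\sum_(j < n) (j == u)%:R * ((u == v)%:R * (R0 i j * C i i))).
  apply: eq_bigr => j _; rewrite contrZ contr_tp !mxE.
  by case: (eqVneq j u) => [->|_] /=; rewrite ?eqxx 1?eq_sym; ring.
rewrite (bigD1 u) //= eqxx mul1r big1 ?addr0 => [|j /negbTE ->]; last by rewrite mul0r.
by ring.
Qed.

Lemma contr_rplus C u v : contr r_plus C u v = ((v < u)%N)%:R * C u v.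
Proof.
rewrite contr_sum summxE.
transitivity (\sum_(i < n) \sum_(k < n | (i < k)%N) (C k i * ((u == k) && (v == i))%:R)).
  by apply: eq_bigr => i _; rewrite contr_sum summxE; apply: eq_bigr => k _;
    rewrite contr_tp mxE elemE.
rewrite (sum_lt_pair_delta (x := v) (y := u)) ?eqxx ?mulr1 // => a b.
by rewrite [u == b]eq_sym [v == a]eq_sym andbC => /negbTE ->; rewrite mulr0.
Qed.

Lemma contr_rtau C u v : contr r_tau C u v =
  ((v < u)%N)%:R * chain_in C v u - ((u < v)%N)%:R * chain_out C u v.
Proof.
set sum5 := fun G : 'I_n -> 'I_n -> 'I_n -> 'I_n -> F =>
  \sum_(i < n) \sum_(k < n | (i < k)%N) \sum_(a < n) \sum_(b < n | (a < b)%N)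
    \sum_(1 <= p < n.+1 | tpm p i k a b) G i k a b.
transitivity (sum5 (fun i k a b => C k i * ((u == b) && (v == a))%:R)
            - sum5 (fun i k a b => C a b * ((u == i) && (v == k))%:R)).
  rewrite contr_sum summxE /sum5 -sumrB; apply: eq_bigr => i _.
  rewrite contr_sum summxE -sumrB; apply: eq_bigr => k _.
  rewrite contr_sum summxE -sumrB; apply: eq_bigr => a _.
  rewrite contr_sum summxE -sumrB; apply: eq_bigr => b _.
  rewrite contr_sum summxE -sumrB; apply: eq_bigr => p _.
  by rewrite contrB !contr_tp !mxE ?elemE.
congr (_ - _).
  rewrite /sum5 /chain_in mulr_sumr; apply: eq_bigr => i _.
  rewrite mulr_sumr; apply: eq_bigr => k _.
  rewrite (sum_lt_pair_delta (x := v) (y := u)) => [|a b ab_neq]; last first.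
    apply: big1 => p _.
    by move: ab_neq; rewrite [u == b]eq_sym [v == a]eq_sym andbC => /negbTE ->; rewrite mulr0.
  by rewrite !eqxx; congr (_ * _); apply: eq_bigr => p _; rewrite mulr1.
rewrite /sum5 /chain_out (sum_lt_pair_delta (x := u) (y := v)) => [|i k ik_neq]; last first.
  do 3! (apply: big1 => ? _).
  by move: ik_neq; rewrite [u == i]eq_sym [v == k]eq_sym => /negbTE ->; rewrite mulr0.
by congr (_ * _); do 3! (apply: eq_bigr => ? _); rewrite !eqxx mulr1.
Qed.

Lemma Lr_entry C u v : Lr C u v =
  (u == v)%:R * (\sum_(i < n) R0 i u * C i i) + ((v < u)%N)%:R * C u v
  + ((v < u)%N)%:R * chain_in C v u - ((u < v)%N)%:R * chain_out C u v.
Proof. by rewrite /Lr rBDE !contrD mxE [X in X + _]mxE contr_r0 contr_rplus contr_rtau addrA. Qed.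


Lemma Lr_diag_entry C (u : 'I_n) : Lr C u u = \sum_(i < n) R0 i u * C i i.
Proof. by rewrite Lr_entry eqxx ltnn !mul0r mul1r !addr0 subr0. Qed.

Lemma Lr_lower_entry C (u v : 'I_n) : (v < u)%N -> Lr C u v = C u v + chain_in C v u.
Proof.
move=> lt_vu; have [uv_neq nlt_uv] : u == v = false /\ (u < v)%N = false.
  split; apply/negbTE; last by rewrite -leqNgt ltnW.
  by apply/eqP => uv; move: lt_vu; rewrite uv ltnn.
by rewrite Lr_entry lt_vu uv_neq nlt_uv !mul0r mul1r mul1r add0r subr0.
Qed.

Lemma Lr_upper_entry C (u v : 'I_n) : (u < v)%N -> Lr C u v = - chain_out C u v.
Proof.
move=> lt_uv; have [uv_neq nlt_vu] : u == v = false /\ (v < u)%N = false.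
  split; apply/negbTE; last by rewrite -leqNgt ltnW.
  by apply/eqP => uv; move: lt_uv; rewrite uv ltnn.
by rewrite Lr_entry lt_uv uv_neq nlt_vu !mul0r mul1r !add0r.
Qed.

Lemma eq_chain_in (C C' : 'M[F]_n) (a b : 'I_n) :
  (forall x y : 'I_n, (y < x)%N -> C x y = C' x y) -> chain_in C a b = chain_in C' a b.
Proof.
by move=> eqC; do 2!apply: eq_bigr => ? ?; apply: eq_bigr => p _; apply: eqC.
Qed.

Lemma eq_chain_out (C C' : 'M[F]_n) (i k : 'I_n) :
  (forall x y : 'I_n, (x < y)%N -> C x y = C' x y) -> chain_out C i k = chain_out C' i k.
Proof.
by move=> eqC; do 2!apply: eq_bigr => ? ?; apply: eq_bigr => p _; apply: eqC.
Qed.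

Lemma chain_in_neq0 C (a b : 'I_n) : chain_in C a b != 0 ->
  exists (i k : 'I_n) p, [/\ (i < k)%N, (0 < p)%N, tpm p i k a b & C k i != 0].
Proof.
move=> /sum_neq0 [i [_ _ /sum_neq0 [k [_ lt_ik /sum_neq0 [p [p_in chain Cki]]]]]].
by exists i, k, p; split => //; move: p_in; rewrite mem_index_iota => /andP [].
Qed.

Lemma chain_out_neq0 C (i k : 'I_n) : chain_out C i k != 0 ->
  exists (a b : 'I_n) p, [/\ (a < b)%N, (0 < p)%N, tpm p i k a b & C a b != 0].
Proof.
move=> /sum_neq0 [a [_ _ /sum_neq0 [b [_ lt_ab /sum_neq0 [p [p_in chain Cab]]]]]].
by exists a, b, p; split => //; move: p_in; rewrite mem_index_iota => /andP [].
Qed.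

Lemma chain_in_eq0 (C : 'M[F]_n) (a b : 'I_n) :
  (forall x y : 'I_n, (y < x)%N -> C x y = 0) -> chain_in C a b = 0.
Proof.
move=> C_low0; rewrite (eq_chain_in (C' := 0)) => [|x y /C_low0 ->]; last by rewrite mxE.
by do 3!(apply: big1 => ? _); rewrite mxE.
Qed.

Lemma chain_out_eq0 (C : 'M[F]_n) (i k : 'I_n) :
  (forall x y : 'I_n, (x < y)%N -> C x y = 0) -> chain_out C i k = 0.
Proof.
move=> C_up0; rewrite (eq_chain_out (C' := 0)) => [|x y /C_up0 ->]; last by rewrite mxE.
by do 3!(apply: big1 => ? _); rewrite mxE.
Qed.

End ContractionBD.

Section Triangular.
Variables (F : fieldType) (n : nat) (G1 : {set 'I_n.-1}) (tau : 'I_n.-1 -> 'I_n.-1).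
Variable (R0 : 'M[F]_n).
Hypothesis tau_nilp : forall i, i \in G1 -> exists k, iter k tau i \notin G1.
Local Notation tpm := (tau_pow_maps G1 tau).
Local Notation Lr := (Lr G1 tau R0).
Local Notation chain_in := (chain_in G1 tau).
Local Notation chain_out := (chain_out G1 tau).

Definition upper_depth (m : nat) (A : 'M[F]_n) : Prop :=
  forall u v, A u v != 0 -> (u < v)%N /\
    (m = 0%N \/ exists (a b : 'I_n) q, [/\ (a < b)%N, (m <= q)%N & tpm q u v a b]).

Definition lower_depth (m : nat) (W : 'M[F]_n) : Prop :=
  forall u v, W u v != 0 -> (v < u)%N /\
    (m = 0%N \/ exists (i k : 'I_n) q, [/\ (i < k)%N, (m <= q)%N & tpm q i k v u]).

Lemma upper_depth_step m A : upper_depth m A -> upper_depth m.+1 (Lr A).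
Proof.
move=> A_up; have A0 (x y : 'I_n) : (y <= x)%N -> A x y = 0.
  by move=> le_yx; apply/eqP; apply: contraTT le_yx => /A_up []; rewrite -ltnNge.
move=> u v; case: (ltngtP u v) => [lt_uv|lt_vu|/val_inj <-].
- rewrite Lr_upper_entry // oppr_eq0 => /chain_out_neq0 [a [b [p [lt_ab p_gt0 chain Aab]]]].
  split => //; right; have [_ [->|[a' [b' [q [lt_ab' le_mq chain']]]]]] := A_up a b Aab.
    by exists a, b, p.
  by exists a', b', (p + q); split => //; [lia | apply: tpm_comp chain chain'].
- rewrite Lr_lower_entry // A0 ?(ltnW lt_vu) // add0r chain_in_eq0 ?eqxx // => x y /ltnW.
  exact: A0.
- by rewrite Lr_diag_entry big1 ?eqxx // => i _; rewrite A0 ?mulr0.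
Qed.

Lemma lower_depth_step m W : lower_depth m W -> lower_depth m.+1 (Lr W - W).
Proof.
move=> W_low; have W0 (x y : 'I_n) : (x <= y)%N -> W x y = 0.
  by move=> le_xy; apply/eqP; apply: contraTT le_xy => /W_low []; rewrite -ltnNge.
move=> u v; rewrite 2!mxE; case: (ltngtP u v) => [lt_uv|lt_vu|/val_inj <-].
- rewrite Lr_upper_entry // W0 ?(ltnW lt_uv) // subr0 chain_out_eq0 ?oppr0 ?eqxx // => x y /ltnW.
  exact: W0.
- rewrite Lr_lower_entry // addrAC subrr add0r.
  move=> /chain_in_neq0 [i [k [p [lt_ik p_gt0 chain Wki]]]].
  split => //; right; have [_ [->|[i' [k' [q [lt_ik' le_mq chain']]]]]] := W_low k i Wki.
    by exists i, k, p.
  by exists i', k', (q + p); split => //; [lia | apply: tpm_comp chain' chain].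
- by rewrite Lr_diag_entry W0 // subr0 big1 ?eqxx // => i _; rewrite W0 ?mulr0.
Qed.

(* Since tau is nilpotent, depth n is impossible. *)
Lemma upper_depth_n A : upper_depth n A -> A = 0.
Proof.
move=> A_up; apply/matrixP => u v; rewrite mxE; apply/eqP; apply: contraT => Auv.
have [lt_uv [n0|[a [b [q [lt_ab le_nq chain]]]]]] := A_up u v Auv; first by have := ltn_ord u; lia.
by have := no_long_chain tau_nilp lt_uv le_nq chain.
Qed.

Lemma lower_depth_n W : lower_depth n W -> W = 0.
Proof.
move=> W_low; apply/matrixP => u v; rewrite mxE; apply/eqP; apply: contraT => Wuv.
have [lt_vu [n0|[i [k [q [lt_ik le_nq chain]]]]]] := W_low u v Wuv; first by have := ltn_ord u; lia.
by have := no_long_chain tau_nilp lt_ik le_nq chain.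
Qed.

Lemma upper_Lr_nilpotent A : upper_depth 0 A -> iter n Lr A = 0.
Proof.
move=> A_up; apply: upper_depth_n.
suff iter_depth k : upper_depth k (iter k Lr A) by apply: iter_depth.
by elim: k => [//|k IH]; apply: upper_depth_step.
Qed.

Lemma lower_Lr_nilpotent W : lower_depth 0 W -> iter n (fun Y => Lr Y - Y) W = 0.
Proof.
move=> W_low; apply: lower_depth_n.
suff iter_depth k : lower_depth k (iter k (fun Y => Lr Y - Y) W) by apply: iter_depth.
by elim: k => [//|k IH]; apply: lower_depth_step.
Qed.

End Triangular.

Lemma iter_commute (A : Type) (f T : A -> A) :
  (forall x, T (f x) = f (T x)) -> forall j x, iter j T (f x) = f (iter j T x).
Proof. by move=> Tf; elim=> [//|j IH] x; rewrite /= IH Tf. Qed.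

Lemma proj_iter_vanish (V : nmodType) (T P : V -> V) (C : V) (m : nat) :
  (forall Y, P (P Y) = P Y) -> (forall Y, P (T Y) = P (T (P Y))) ->
  (forall Y, P Y = Y -> P (T Y) = T Y) -> (forall Z, P Z = Z -> T Z = 0 -> Z = 0) ->
  P (iter m T C) = 0 -> P C = 0.
Proof.
move=> P_idem P_T T_im T_inj.
have P_iter j : P (iter j T C) = iter j T (P C) /\ P (iter j T (P C)) = iter j T (P C).
  by elim: j => [|j [IH1 IH2]]; rewrite /= ?P_idem // P_T IH1 !T_im.
suff vanish j : iter j T (P C) = 0 -> P C = 0 by rewrite (P_iter m).1; apply: vanish.
elim: j => [//|j IH] Tj0; apply: IH; apply: T_inj Tj0; exact: (P_iter j).2.
Qed.

Section Invariance.
Variables (F : fieldType) (n : nat) (G1 : {set 'I_n.-1}) (tau : 'I_n.-1 -> 'I_n.-1).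
Variable (R0 : 'M[F]_n).
Hypothesis tau_nilp : forall i, i \in G1 -> exists k, iter k tau i \notin G1.
Local Notation Lr := (Lr G1 tau R0).

Lemma Lr_Ad X : Cset (rBD G1 tau R0) X -> forall B, Lr (Ad X B) = Ad X (Lr B).
Proof.
move=> [X_unit r_inv] B; rewrite /Lr -{1}r_inv contr_tmap; congr (Ad X (contr _ _)).
by rewrite /Ad !mulmxA mulVmx // mul1mx -mulmxA mulVmx // mulmx1.
Qed.

Lemma Ad_sub X (A B : 'M[F]_n) : Ad X (A - B) = Ad X A - Ad X B.
Proof. by rewrite /Ad mulmxBr mulmxBl. Qed.

Lemma Ad0 X : Ad X 0 = 0 :> 'M[F]_n.
Proof. by rewrite /Ad mulmx0 mul0mx. Qed.

Definition strict_lower (C : 'M[F]_n) : 'M[F]_n :=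
  \matrix_(u, v) if (v < u)%N then C u v else 0.
Definition strict_upper (C : 'M[F]_n) : 'M[F]_n :=
  \matrix_(u, v) if (u < v)%N then C u v else 0.

Lemma strict_lowerE C u v : strict_lower C u v = if (v < u)%N then C u v else 0.
Proof. by rewrite mxE. Qed.

Lemma strict_upperE C u v : strict_upper C u v = if (u < v)%N then C u v else 0.
Proof. by rewrite mxE. Qed.

Lemma strict_lower_idem Y : strict_lower (strict_lower Y) = strict_lower Y.
Proof. by apply/matrixP => u v; rewrite !strict_lowerE; case: (v < u)%N. Qed.

Lemma strict_upper_idem Y : strict_upper (strict_upper Y) = strict_upper Y.
Proof. by apply/matrixP => u v; rewrite !strict_upperE; case: (u < v)%N. Qed.

Lemma strict_lowerP Y : strict_lower Y = Y -> forall u v : 'I_n, (u <= v)%N -> Y u v = 0.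
Proof. by move=> <- u v le_uv; rewrite strict_lowerE ltnNge le_uv. Qed.

Lemma strict_upperP Y : strict_upper Y = Y -> forall u v : 'I_n, (v <= u)%N -> Y u v = 0.
Proof. by move=> <- u v le_vu; rewrite strict_upperE ltnNge le_vu. Qed.

Lemma strict_lower_Lr Y : strict_lower (Lr Y) = strict_lower (Lr (strict_lower Y)).
Proof.
apply/matrixP => u v; rewrite !strict_lowerE; case: ifP => // lt_vu.
rewrite !Lr_lower_entry // strict_lowerE lt_vu; congr (_ + _).
by apply: eq_chain_in => x y lt_yx; rewrite strict_lowerE lt_yx.
Qed.

Lemma Lr_strict_lower Y : strict_lower Y = Y -> strict_lower (Lr Y) = Lr Y.
Proof.
move=> Y_low; have Y0 := strict_lowerP Y_low.
apply/matrixP => u v; rewrite strict_lowerE; case: ifP => // /negbT; rewrite -leqNgt.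
rewrite leq_eqVlt => /orP [/eqP/val_inj ->|lt_uv].
  by rewrite Lr_diag_entry big1 // => i _; rewrite Y0 ?mulr0.
rewrite Lr_upper_entry // chain_out_eq0 ?oppr0 // => x y /ltnW; exact: Y0.
Qed.

Lemma strict_upper_Lr Y :
  strict_upper (Lr Y - Y) = strict_upper (Lr (strict_upper Y) - strict_upper Y).
Proof.
apply/matrixP => u v; rewrite !strict_upperE; case: ifP => // lt_uv.
rewrite !mxE !Lr_upper_entry // lt_uv; congr (- _ - _).
by apply: eq_chain_out => x y lt_xy; rewrite strict_upperE lt_xy.
Qed.

Lemma Lr_strict_upper Y : strict_upper Y = Y -> strict_upper (Lr Y - Y) = Lr Y - Y.
Proof.
move=> Y_up; have Y0 := strict_upperP Y_up.
apply/matrixP => u v; rewrite strict_upperE; case: ifP => // /negbT; rewrite -leqNgt => le_vu.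
rewrite 2!mxE Y0 // subr0; move: le_vu; rewrite leq_eqVlt => /orP [/eqP/val_inj ->|lt_vu].
  by rewrite Lr_diag_entry big1 // => i _; rewrite Y0 ?mulr0.
rewrite Lr_lower_entry // Y0 ?(ltnW lt_vu) // add0r chain_in_eq0 // => x y /ltnW; exact: Y0.
Qed.

(* Lr is injective on strictly lower triangular matrices, since Lr - 1 is
   nilpotent there ... *)
Lemma Lr_kernel_lower Z : strict_lower Z = Z -> Lr Z = 0 -> Z = 0.
Proof.
move=> Z_low LrZ; apply: (lower_depth_n tau_nilp).
suff depth k : lower_depth G1 tau k Z by apply: depth.
elim: k => [|k IH] u v Zuv.
  split; last by left.
  by move: Zuv; apply: contraNT; rewrite -leqNgt => /(strict_lowerP Z_low) ->.
by have := lower_depth_step (R0 := R0) IH; rewrite LrZ sub0r; apply; rewrite mxE oppr_eq0.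
Qed.

(* ... and Lr - 1 is injective on strictly upper triangular ones, since Lr is
   nilpotent there. *)
Lemma Lr_kernel_upper Z : strict_upper Z = Z -> Lr Z - Z = 0 -> Z = 0.
Proof.
move=> Z_up /eqP; rewrite subr_eq0 => /eqP LrZ; apply: (upper_depth_n tau_nilp).
suff depth k : upper_depth G1 tau k Z by apply: depth.
elim: k => [|k IH] u v Zuv.
  split; last by left.
  by move: Zuv; apply: contraNT; rewrite -leqNgt => /(strict_upperP Z_up) ->.
by have := upper_depth_step (R0 := R0) IH; rewrite LrZ; apply.
Qed.

Local Notation sh := (shift F n).

Lemma shift_upper : upper_depth G1 tau 0 sh.
Proof.
move=> u v; rewrite mxE; have [-> _|] := eqVneq (v : nat) u.+1; last by rewrite eqxx.
by split; [|left].
Qed.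

Lemma shiftT_lower : lower_depth G1 tau 0 sh^T.
Proof.
move=> u v; rewrite !mxE; have [-> _|] := eqVneq (u : nat) v.+1; last by rewrite eqxx.
by split; [|left].
Qed.

(* For X in C(r_BD), Ad X carries the principal nilpotent into the upper
   triangle: its strictly lower part vanishes because Lr is injective there
   and Lr^n (shift) = 0. *)
Lemma strict_lower_Ad_shift X : Cset (rBD G1 tau R0) X -> strict_lower (Ad X sh) = 0.
Proof.
move=> X_in; apply: (proj_iter_vanish (T := Lr) (m := n)).
- exact: strict_lower_idem.
- exact: strict_lower_Lr.
- exact: Lr_strict_lower.
- exact: Lr_kernel_lower.
rewrite (iter_commute (Lr_Ad X_in)) (upper_Lr_nilpotent R0 tau_nilp shift_upper) Ad0.
by apply/matrixP => u v; rewrite strict_lowerE mxE; case: ifP.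
Qed.

Lemma strict_upper_Ad_shiftT X : Cset (rBD G1 tau R0) X -> strict_upper (Ad X sh^T) = 0.
Proof.
move=> X_in; apply: (proj_iter_vanish (T := fun Y => Lr Y - Y) (m := n)).
- exact: strict_upper_idem.
- exact: strict_upper_Lr.
- exact: Lr_strict_upper.
- exact: Lr_kernel_upper.
have Ad_comm B : Lr (Ad X B) - Ad X B = Ad X (Lr B - B) by rewrite Lr_Ad // Ad_sub.
rewrite (iter_commute Ad_comm) (lower_Lr_nilpotent R0 tau_nilp shiftT_lower) Ad0.
by apply/matrixP => u v; rewrite strict_upperE mxE; case: ifP.
Qed.

End Invariance.

(* Ad X shift is upper and Ad X shift^T
   lower triangular; being nilpotent they have zero diagonal, and then
   X shift = (Ad X shift) X and X shift^T = (Ad X shift^T) X force X to be both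
   upper and lower triangular. *)
Lemma Cset_diagonal (F : fieldType) (n : nat) (G1 : {set 'I_n.-1})
    (tau : 'I_n.-1 -> 'I_n.-1) (R0 : 'M[F]_n) :
  (forall i, i \in G1 -> exists k, iter k tau i \notin G1) ->
  forall X, Cset (rBD G1 tau R0) X -> forall i j : 'I_n, i != j -> X i j = 0.
Proof.
move=> tau_nilp X X_in i j; have X_unit := X_in.1.
have n_gt0 : (0 < n)%N by apply: leq_ltn_trans (ltn_ord i).
set C := Ad X (shift F n); set D := Ad X (shift F n)^T.
have C_low (u v : 'I_n) : (v < u)%N -> C u v = 0.
  move=> lt_vu; move/matrixP: (strict_lower_Ad_shift tau_nilp X_in) => /(_ u v).
  by rewrite strict_lowerE lt_vu => ->; rewrite mxE.
have D_up (u v : 'I_n) : (u < v)%N -> D u v = 0.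
  move=> lt_uv; move/matrixP: (strict_upper_Ad_shiftT tau_nilp X_in) => /(_ u v).
  by rewrite strict_upperE lt_uv => ->; rewrite mxE.
have C_diag u : C u u = 0 := conj_shift_diag n_gt0 (mulVmx X_unit) C_low u.
have D_diag u : D u u = 0.
  have DT : D^T = (invmx X)^T *m shift F n *m X^T by rewrite !trmx_mul trmxK mulmxA.
  have XTV : X^T *m (invmx X)^T = 1%:M by rewrite -trmx_mul mulVmx // trmx1.
  have := conj_shift_diag n_gt0 XTV; rewrite -DT => /(_ _ u); rewrite mxE; apply.
  by move=> u' v' lt_vu'; rewrite mxE D_up.
have C_strict u v : C u v != 0 -> (u < v)%N.
  by apply: contraR; rewrite -leqNgt leq_eqVlt => /orP [/eqP/val_inj ->|/C_low ->]; rewrite ?C_diag.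
have D_strict u v : D u v != 0 -> (v < u)%N.
  by apply: contraR; rewrite -leqNgt leq_eqVlt => /orP [/eqP/val_inj ->|/D_up ->]; rewrite ?D_diag.
rewrite neq_ltn => /orP [lt_ij|lt_ji].
  by apply: (intertwine_shiftT_lower (C := D)) => //; rewrite /D /Ad mulmxKV.
by apply: (intertwine_shift_upper (C := C)) => //; rewrite /C /Ad mulmxKV.
Qed.

Section DiagonalElements.
Variables (F : fieldType) (n : nat) (G1 : {set 'I_n.-1}) (tau : 'I_n.-1 -> 'I_n.-1).
Variable (R0 : 'M[F]_n).
Local Notation tpm := (tau_pow_maps G1 tau).
Local Notation Lr := (Lr G1 tau R0).
Local Notation chain_in := (chain_in G1 tau).
Local Notation chain_out := (chain_out G1 tau).

Lemma Lr_scale c B : Lr (c *: B) = c *: Lr B.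
Proof. by rewrite /Lr /contr scaler_sumr; apply: eq_bigr => q _; rewrite mxE scalerA. Qed.

Lemma rootc_simple (j x : 'I_n.-1) : rootc (sr_lo j) (sr_hi j) x = (x == j)%:R.
Proof.
rewrite /rootc /= (_ : ((j <= x) && (x < j.+1))%N = (x == j)); first by case: (x == j).
by rewrite ltnS -eqn_leq eq_sym.
Qed.

Lemma tpm_simple j : j \in G1 -> tpm 1 (sr_lo j) (sr_hi j) (sr_lo (tau j)) (sr_hi (tau j)).
Proof.
move=> j_in; apply/tpmP; split => [m|].
  rewrite ltnS leqn0 => /eqP -> /=; apply/forallP => x; apply/implyP => x_notin.
  by rewrite rootc_simple; case: (eqVneq x j) x_notin => [->|_ _]; rewrite ?j_in ?eqxx.
apply: functional_extensionality => x /=; rewrite rootc_simple /tauc.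
under eq_bigr do rewrite rootc_simple.
have [tau_jx|tau_jx] := eqVneq (tau j) x.
  rewrite (bigD1 j) /=; last by rewrite j_in tau_jx eqxx.
  by rewrite eqxx big1 ?addr0 -?tau_jx ?eqxx // => i /andP [_ /negbTE ->].
rewrite big1 ?(negbTE (negbT _)) // => i /andP [_ /eqP tau_ix].
by case: eqP tau_ix => // -> tau_jx'; rewrite tau_jx' eqxx in tau_jx.
Qed.

Lemma chain_in_elem (i k a b : 'I_n) : (i < k)%N ->
  chain_in (E F k i) a b = (\sum_(1 <= p < n.+1 | tpm p i k a b) 1%N)%:R.
Proof.
move=> lt_ik; rewrite /chain_in (sum_lt_pair_delta (x := i) (y := k)) => [|i' k' ik_neq].
  by rewrite lt_ik mul1r natr_sum; apply: eq_bigr => p _; rewrite elemE !eqxx.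
by apply: big1 => p _; rewrite elemE andbC (negbTE ik_neq).
Qed.

(* The contraction Lr sends e_(alpha_j)^- = e_(j+1,j) to a matrix whose entry
   at -tau(alpha_j) counts the chains from alpha_j to tau(alpha_j), among them
   tau itself; in characteristic 0 this entry is nonzero. *)
Lemma Lr_simple_root_neq0 j : [pchar F] =i pred0 -> j \in G1 ->
  Lr (E F (sr_hi j) (sr_lo j)) (sr_hi (tau j)) (sr_lo (tau j)) != 0.
Proof.
move=> char0 j_in; rewrite Lr_lower_entry /= ?ltnSn // chain_in_elem /= ?ltnSn // elemE.
rewrite -natrD (pcharf0P _).1 // big_ltn_cond; last by have := ltn_ord j; lia.
by rewrite tpm_simple //; lia.
Qed.

(* For diagonal X in C(r_BD), comparing Lr (Ad X e) = Ad X (Lr e) at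
   (j' + 1, j'), j' = tau j, for e = e_(j+1,j) shows that the ratios
   x_(j+1) / x_j are tau-invariant. *)
Lemma Cset_diag_ratio X j : [pchar F] =i pred0 -> Cset (rBD G1 tau R0) X ->
  (forall i k : 'I_n, i != k -> X i k = 0) -> j \in G1 ->
  X (sr_hi j) (sr_hi j) / X (sr_lo j) (sr_lo j) =
  X (sr_hi (tau j)) (sr_hi (tau j)) / X (sr_lo (tau j)) (sr_lo (tau j)).
Proof.
move=> char0 X_in X_diag j_in; have X_unit := X_in.1.
have AdE : Ad X (E F (sr_hi j) (sr_lo j)) =
    (X (sr_hi j) (sr_hi j) / X (sr_lo j) (sr_lo j)) *: E F (sr_hi j) (sr_lo j).
  apply/matrixP => u v; rewrite Ad_diagE // !mxE.
  by case: (eqVneq u (sr_hi j)) => [->|_]; case: (eqVneq v (sr_lo j)) => [->|_];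
    rewrite /= ?mulr0 ?mul0r //; ring.
have := Lr_Ad X_in (E F (sr_hi j) (sr_lo j)); rewrite AdE Lr_scale.
move=> /matrixP /(_ (sr_hi (tau j)) (sr_lo (tau j))); rewrite mxE Ad_diagE // [RHS]mulrAC.
by apply: mulIf; apply: Lr_simple_root_neq0.
Qed.

End DiagonalElements.

Section TdiagInvariance.
Variables (F : fieldType) (n : nat) (G1 : {set 'I_n.-1}) (tau : 'I_n.-1 -> 'I_n.-1).
Variables (R0 : 'M[F]_n) (s : 'I_n -> F).
Hypothesis s_neq0 : forall i, s i != 0.
Hypothesis s_tau : forall j, j \in G1 -> s (sr_lo j) = s (sr_lo (tau j)).
Local Notation tpm := (tau_pow_maps G1 tau).
Local Notation Lr := (Lr G1 tau R0).
Local Notation chain_in := (chain_in G1 tau).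
Local Notation chain_out := (chain_out G1 tau).
Local Notation T := (Tdiag s).
Local Notation t := (tt s).

Lemma Tdiag_offdiag (i j : 'I_n) : i != j -> T i j = 0.
Proof. by move=> ij_neq; rewrite !mxE (negbTE ij_neq) mulr0n. Qed.

Lemma Tdiag_unit : T \in unitmx.
Proof.
rewrite unitmxE det_diag unitfE; apply/prodf_neq0 => i _; rewrite mxE.
exact: tt_neq0.
Qed.

Lemma Ad_TdiagE B u v : Ad T B u v = t u * B u v / t v.
Proof.
by rewrite (Ad_diagE _ Tdiag_unit Tdiag_offdiag) !mxE !eqxx !mulr1n.
Qed.

Lemma tt_ratio_tpm p (i k a b : 'I_n) : (i <= k)%N -> (a <= b)%N ->
  tpm p i k a b -> t k / t i = t b / t a.
Proof.
move=> le_ik le_ab chain; apply/eqP; rewrite eqr_div ?tt_neq0 //; apply/eqP.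
by rewrite -(tt_tpm s_neq0 s_tau le_ik le_ab chain) mulrC.
Qed.

Lemma chain_in_Ad_Tdiag B (a b : 'I_n) : (a <= b)%N ->
  chain_in (Ad T B) a b = t b / t a * chain_in B a b.
Proof.
move=> le_ab; rewrite /chain_in mulr_sumr; apply: eq_bigr => i _.
rewrite mulr_sumr; apply: eq_bigr => k lt_ik; rewrite mulr_sumr; apply: eq_bigr => p chain.
by rewrite Ad_TdiagE -(tt_ratio_tpm (ltnW lt_ik) le_ab chain); ring.
Qed.

Lemma chain_out_Ad_Tdiag B (i k : 'I_n) : (i <= k)%N ->
  chain_out (Ad T B) i k = t i / t k * chain_out B i k.
Proof.
move=> le_ik; rewrite /chain_out mulr_sumr; apply: eq_bigr => a _.
rewrite mulr_sumr; apply: eq_bigr => b lt_ab; rewrite mulr_sumr; apply: eq_bigr => p chain.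
have := tt_ratio_tpm le_ik (ltnW lt_ab) chain; move/(congr1 GRing.inv); rewrite !invf_div.
by rewrite Ad_TdiagE => ->; ring.
Qed.

(* Contraction against r_BD commutes with Ad T: each term of r_BD has weight 1. *)
Lemma Lr_Ad_Tdiag B : Lr (Ad T B) = Ad T (Lr B).
Proof.
have t_neq0 := tt_neq0 s_neq0.
apply/matrixP => u v; rewrite Ad_TdiagE; case: (ltngtP u v) => [lt_uv|lt_vu|/val_inj <-].
- by rewrite !Lr_upper_entry // chain_out_Ad_Tdiag ?(ltnW lt_uv) //; field.
- by rewrite !Lr_lower_entry // chain_in_Ad_Tdiag ?(ltnW lt_vu) // Ad_TdiagE; field.
rewrite !Lr_diag_entry mulrC mulrA mulVf // mul1r; apply: eq_bigr => i _.
by rewrite Ad_TdiagE mulrAC divff ?mul1r.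
Qed.

Lemma Tdiag_in_Cset : Cset (rBD G1 tau R0) T.
Proof.
split; first exact: Tdiag_unit.
apply: contr_inj => C; rewrite contr_tmap.
transitivity (Lr (Ad T (invmx T *m C *m T))); first by rewrite Lr_Ad_Tdiag.
by rewrite /Ad !mulmxA mulmxV ?Tdiag_unit // mul1mx mulmxK ?Tdiag_unit.
Qed.

End TdiagInvariance.

(* Every invertible diagonal matrix is of the form Tdiag s, with
   s_i = x_i / x_(i+1) for i < n and s_n = x_n. *)
Lemma diag_Tdiag (F : fieldType) (n : nat) (X : 'M[F]_n) :
  (forall i j : 'I_n, i != j -> X i j = 0) -> (forall i, X i i != 0) ->
  exists s : 'I_n -> F, [/\ forall i, s i != 0,
    forall j : 'I_n.-1, s (sr_lo j) = X (sr_lo j) (sr_lo j) / X (sr_hi j) (sr_hi j) &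
    X = Tdiag s].
Proof.
move=> X_diag X_neq0.
pose x (m : nat) : F := odflt 1 (omap (fun o : 'I_n => X o o) (insub m)).
have xE (o : 'I_n) : x o = X o o by rewrite /x valK.
have x_neq0 m : x m != 0 by rewrite /x; case: insubP => [o _ _|_] /=; rewrite ?oner_eq0.
pose s (m : nat) : F := if (m.+1 < n)%N then x m / x m.+1 else x m.
have telescope m : (m < n)%N -> \prod_(m <= k < n) s k = x m.
  move=> lt_mn; elim: (n - m)%N {-2}m (erefl (n - m)%N) lt_mn => [|d IH] m' d_eq lt_m'n.
    by lia.
  rewrite big_ltn // /s; case: ltnP => [lt_m'1|le_nm'1].
    by rewrite IH ?mulfVK //; lia.
  by rewrite big_geq ?mulr1 //.
exists (fun k : 'I_n => s k); split.
- by move=> i; rewrite /s; case: ifP => _; rewrite ?mulf_neq0 ?invr_eq0.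
- move=> j; rewrite /s /= ifT; last by have := ltn_ord j; lia.
  by rewrite -[X (sr_lo j) _]xE -[X (sr_hi j) _]xE.
apply/matrixP => u v; rewrite !mxE; case: (eqVneq u v) => [<-|uv_neq]; last first.
  by rewrite X_diag // mulr0n.
rewrite mulr1n /tt -xE -telescope //.
by rewrite big_geq_mkord; apply: eq_bigl => k; rewrite andTb.
Qed.

Lemma Cset_Tdiag (F : fieldType) (n : nat) (G1 : {set 'I_n.-1})
    (tau : 'I_n.-1 -> 'I_n.-1) (R0 : 'M[F]_n) :
  [pchar F] =i pred0 -> (forall i, i \in G1 -> exists k, iter k tau i \notin G1) ->
  forall X, Cset (rBD G1 tau R0) X ->
  exists s : 'I_n -> F, [/\ forall i, s i != 0,
    forall j, j \in G1 -> s (sr_lo j) = s (sr_lo (tau j)) & X = Tdiag s].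
Proof.
move=> char0 tau_nilp X X_in.
have X_diag := Cset_diagonal tau_nilp X_in.
have [X_neq0 _] := diag_invmx X_in.1 X_diag.
have [s [s_neq0 s_ratio X_eq]] := diag_Tdiag X_diag X_neq0.
exists s; split => // j j_in; rewrite !s_ratio -invf_div.
by rewrite (Cset_diag_ratio char0 X_in X_diag j_in) invf_div.
Qed.

Theorem mainTheorem8 (F : closedFieldType) (hF : [pchar F] =i pred0) (n : nat) (hn : (2 <= n)%N)
  (G1 G2 : {set 'I_n.-1}) (tau : 'I_n.-1 -> 'I_n.-1) (R0 : 'M[F]_n) :
  admissible G1 G2 tau ->
  in_hh R0 ->
  R0 + R0^T = Omega0c F n ->
  r0_tau_cond G1 tau R0 ->
  forall X : 'M[F]_n,
    Cset (rBD G1 tau R0) X <->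
    exists s : 'I_n -> F,
      [/\ forall i, s i != 0,
          forall j, j \in G1 -> s (sr_lo j) = s (sr_lo (tau j)) &
          X = Tdiag s].
Proof.
move=> [_ _ _ tau_nilp] _ _ _ X; split; first exact: Cset_Tdiag.
by move=> [s [s_neq0 s_tau ->]]; apply: Tdiag_in_Cset.
Qed.
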